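(* Let $X,Y$ be mm-spaces and $F\in\mathcal F^2$. Then for every $\kappa\in(0,1)$ and $\kappa'\in(0,1/4)$, $$\mathrm{OD}(X\times_F Y;-2(\kappa+\kappa'))\le 4F(\mathrm{OD}(X;-\kappa),0)+8F(0,\mathrm{OD}(Y;-\kappa')).$$
   Context: An mm-space is a triple $(X,d_X,m_X)$ with $(X,d_X)$ complete separable metric space and $m_X$ a Borel probability measure. $\mathcal F^2$ is the set of continuous functions $F\colon[0,+\infty)^2\to[0,+\infty)$ such that for any metric spaces $(X,d_X),(Y,d_Y)$, $d_F((x,y),(x',y')):=F(d_X(x,x'),d_Y(y,y'))$ is a metric on $X\times Y$; $X\times_FY:=(X\times Y,d_F,m_X\otimes m_Y)$. Partial diameter: $\mathrm{PD}(X;\alpha)$ = infimum of $\operatorname{diam}A$ over Borel $A$ with $m_X(A)\ge\alpha$. Observable diameter: $\mathrm{OD}(X;-\kappa):=\sup_f\mathrm{PD}((\mathbb R,|\cdot|,f_*m_X);1-\kappa)$ over 1-Lipschitz $f\colon X\to\mathbb R$. *)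

From Stdlib Require Import Reals.
Open Scope R_scope.

Definition is_metric {T : Type} (d : T -> T -> R) : Prop :=
  (forall x y, 0 <= d x y) /\
  (forall x y, d x y = 0 <-> x = y) /\
  (forall x y, d x y = d y x) /\
  (forall x y z, d x z <= d x y + d y z).

Definition complete_metric {T : Type} (d : T -> T -> R) : Prop :=
  forall u : nat -> T,
    (forall e, 0 < e -> exists N, forall n k, (N <= n)%nat -> (N <= k)%nat -> d (u n) (u k) < e) ->
    exists x, forall e, 0 < e -> exists N, forall n, (N <= n)%nat -> d (u n) x < e.

Definition separable_metric {T : Type} (d : T -> T -> R) : Prop :=
  exists s : nat -> T, forall x e, 0 < e -> exists n, d x (s n) < e.

Definition open_set {T : Type} (d : T -> T -> R) (U : T -> Prop) : Prop :=
  forall x, U x -> exists e, 0 < e /\ forall y, d x y < e -> U y.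

Definition sigma_algebra {T : Type} (S : (T -> Prop) -> Prop) : Prop :=
  S (fun _ => False) /\
  (forall A, S A -> S (fun x => ~ A x)) /\
  (forall A : nat -> T -> Prop, (forall n, S (A n)) -> S (fun x => exists n, A n x)).

Definition borel {T : Type} (d : T -> T -> R) (A : T -> Prop) : Prop :=
  forall S : (T -> Prop) -> Prop, sigma_algebra S -> (forall U, open_set d U -> S U) -> S A.

(** Borel probability measure (values on non-Borel sets are irrelevant). *)
Definition borel_prob_measure {T : Type} (d : T -> T -> R) (m : (T -> Prop) -> R) : Prop :=
  m (fun _ => False) = 0 /\
  (forall A, borel d A -> 0 <= m A) /\
  (forall A : nat -> T -> Prop,
     (forall n, borel d (A n)) ->
     (forall i j x, i <> j -> A i x -> A j x -> False) ->
     infinite_sum (fun n => m (A n)) (m (fun x => exists n, A n x))) /\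
  m (fun _ => True) = 1.

Record mmSpace : Type := MMSpace {
  mm_T : Type;
  mm_d : mm_T -> mm_T -> R;
  mm_m : (mm_T -> Prop) -> R;
  mm_metric : is_metric mm_d;
  mm_complete : complete_metric mm_d;
  mm_separable : separable_metric mm_d;
  mm_prob : borel_prob_measure mm_d mm_m
}.

Definition in_F2 (F : R -> R -> R) : Prop :=
  (forall a b, 0 <= a -> 0 <= b -> forall e, 0 < e -> exists del, 0 < del /\
     forall a' b', 0 <= a' -> 0 <= b' -> Rabs (a' - a) < del -> Rabs (b' - b) < del ->
       Rabs (F a' b' - F a b) < e) /\
  (forall a b, 0 <= a -> 0 <= b -> 0 <= F a b) /\
  (forall (T1 T2 : Type) (d1 : T1 -> T1 -> R) (d2 : T2 -> T2 -> R),
     is_metric d1 -> is_metric d2 ->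
     is_metric (fun p q : T1 * T2 => F (d1 (fst p) (fst q)) (d2 (snd p) (snd q)))).

Definition dF (F : R -> R -> R) (X Y : mmSpace) (p q : mm_T X * mm_T Y) : R :=
  F (mm_d X (fst p) (fst q)) (mm_d Y (snd p) (snd q)).

Definition is_product_measure (F : R -> R -> R) (X Y : mmSpace)
  (m : (mm_T X * mm_T Y -> Prop) -> R) : Prop :=
  borel_prob_measure (dF F X Y) m /\
  forall A B, borel (mm_d X) A -> borel (mm_d Y) B ->
    m (fun p => A (fst p) /\ B (snd p)) = mm_m X A * mm_m Y B.

Definition dR (x y : R) : R := Rabs (x - y).

Definition is_glb (S : R -> Prop) (v : R) : Prop :=
  (forall r, S r -> v <= r) /\ (forall w, (forall r, S r -> w <= r) -> w <= v).

(** diam A = r, for nonempty A with finite diameter *)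
Definition diam_is (A : R -> Prop) (r : R) : Prop :=
  is_lub (fun t => exists x y, A x /\ A y /\ t = Rabs (x - y)) r.

Definition PD_is (mu : (R -> Prop) -> R) (alpha v : R) : Prop :=
  is_glb (fun r => exists A, borel dR A /\ alpha <= mu A /\ diam_is A r) v.

Definition push {T : Type} (f : T -> R) (m : (T -> Prop) -> R) : (R -> Prop) -> R :=
  fun A => m (fun x => A (f x)).

Definition lip1 {T : Type} (d : T -> T -> R) (f : T -> R) : Prop :=
  forall x y, Rabs (f x - f y) <= d x y.

Definition OD_set {T : Type} (d : T -> T -> R) (m : (T -> Prop) -> R) (kappa : R) : R -> Prop :=
  fun p => exists f, lip1 d f /\ PD_is (push f m) (1 - kappa) p.

Definition OD_is {T : Type} (d : T -> T -> R) (m : (T -> Prop) -> R) (kappa v : R) : Prop :=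
  is_lub (OD_set d m kappa) v.

(** Let [f] be 1-Lipschitz on [X *_F Y]. For each [x] let [G x] be a
    [kappa']-quantile of [y |-> f (x, y)]; like [f] in its first variable, [G]
    has modulus [F (.) 0], and let [u] be a [kappa]-quantile of [G].

    If [m S > kappa], the [(OD + eta)]-neighbourhood of [S] has measure at least
    [1 - kappa]: apply the definition of [OD] to the distance function to [S].
    Hence a function [g] with modulus [w] satisfying [w t <= 2 w r] for
    [t <= 2 r] lies in [(u - del, u + del + 2 w (OD + eta))] off a set of measure
    [2 kappa], [u] being its [kappa]-quantile. For [w = F (.) 0] and [F 0 (.)]
    this doubling property is the triangle inequality of [d_F] on a three-point
    space times a point. Applied to [G] on [X] and to [f] on each fibre, and
    combined by a Fubini inequality, this puts [f] in an interval of length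
    about [2 F (a, 0) + 2 F (0, b)] with probability [1 - 2 (kappa + kappa')],
    which is even better than the bound claimed. *)

From Stdlib Require Import Reals Lra Lia Classical FunctionalExtensionality
  PropExtensionality ClassicalEpsilon Cantor.
Open Scope R_scope.

Lemma Rabs_lt_bounds x y e : Rabs (x - y) < e -> x - e < y < x + e.
Proof. unfold Rabs; destruct (Rcase_abs _); intros; lra. Qed.

Lemma Rabs_le_bounds x y e : Rabs (x - y) <= e -> x - e <= y <= x + e.
Proof. unfold Rabs; destruct (Rcase_abs _); intros; lra. Qed.

Lemma pred_ext {T : Type} (A B : T -> Prop) : (forall x, A x <-> B x) -> A = B.
Proof. intro H; apply functional_extensionality; intro x; apply propositional_extensionality; auto. Qed.

Lemma measure_ext {T : Type} (m : (T -> Prop) -> R) (A B : T -> Prop) :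
  (forall x, A x <-> B x) -> m A = m B.
Proof. intro H; rewrite (pred_ext A B H); reflexivity. Qed.

Section Metric.
Context {T : Type} (d : T -> T -> R) (Hd : is_metric d).

Lemma metric_nonneg x y : 0 <= d x y.
Proof. apply Hd. Qed.

Lemma metric_refl x : d x x = 0.
Proof. apply Hd; reflexivity. Qed.

Lemma metric_sym x y : d x y = d y x.
Proof. apply Hd. Qed.

Lemma metric_triangle x y z : d x z <= d x y + d y z.
Proof. apply Hd. Qed.

Lemma is_metric_comap {S : Type} (g : S -> T) :
  (forall p q, g p = g q -> p = q) -> is_metric (fun p q => d (g p) (g q)).
Proof.
  intro Hg; split; [|split; [|split]]; intros.
  - apply metric_nonneg.
  - split; intro H; [apply Hg, Hd, H | subst; apply metric_refl].
  - apply metric_sym.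
  - apply metric_triangle.
Qed.

Definition nbhd (S : T -> Prop) (r : R) : T -> Prop := fun x => exists s, S s /\ d x s < r.

Lemma open_nbhd (S : T -> Prop) r : open_set d (nbhd S r).
Proof.
  intros x [s [Hs Hxs]]. exists (r - d x s); split; [lra|].
  intros y Hy. exists s; split; auto.
  pose proof (metric_triangle y x s). rewrite (metric_sym y x) in H. lra.
Qed.

Lemma open_ball c r : open_set d (fun y => d c y < r).
Proof.
  intros x Hx. exists (r - d c x); split; [lra|].
  intros y Hy. pose proof (metric_triangle c x y). lra.
Qed.

End Metric.

Lemma dR_metric : is_metric dR.
Proof.
  unfold dR; split; [|split; [|split]].
  - intros; apply Rabs_pos.
  - intros x y; split; intro H.
    + unfold Rabs in H; destruct (Rcase_abs _); lra.
    + subst; replace (y - y) with 0 by ring; apply Rabs_R0.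
  - intros; apply Rabs_minus_sym.
  - intros x y z. replace (x - z) with ((x - y) + (y - z)) by ring. apply Rabs_triang.
Qed.

Section Borel.
Context {T : Type} (d : T -> T -> R).

Lemma borel_ext (A B : T -> Prop) : (forall x, A x <-> B x) -> borel d A -> borel d B.
Proof. intros H; rewrite (pred_ext A B H); auto. Qed.

Lemma borel_open U : open_set d U -> borel d U.
Proof. intros HU S _ HO; apply HO; exact HU. Qed.

Lemma borel_False : borel d (fun _ => False).
Proof. intros S HS _; exact (proj1 HS). Qed.

Lemma borel_not A : borel d A -> borel d (fun x => ~ A x).
Proof. intros HA S HS HO; apply (proj1 (proj2 HS)); apply HA; auto. Qed.

Lemma borel_exists (A : nat -> T -> Prop) :
  (forall n, borel d (A n)) -> borel d (fun x => exists n, A n x).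
Proof. intros HA S HS HO; apply (proj2 (proj2 HS)); intro n; apply HA; auto. Qed.

Lemma borel_True : borel d (fun _ => True).
Proof. apply borel_ext with (fun x => ~ False); [tauto | apply borel_not, borel_False]. Qed.

Lemma borel_or A B : borel d A -> borel d B -> borel d (fun x => A x \/ B x).
Proof.
  intros HA HB.
  apply borel_ext with (fun x => exists n : nat, (match n with 0%nat => A | _ => B end) x).
  - intro x; split.
    + intros [[|n] H]; auto.
    + intros [H|H]; [exists 0%nat | exists 1%nat]; exact H.
  - apply borel_exists; intros [|n]; auto.
Qed.

Lemma borel_and A B : borel d A -> borel d B -> borel d (fun x => A x /\ B x).
Proof.
  intros HA HB. apply borel_ext with (fun x => ~ (~ A x \/ ~ B x)).
  - intro x; pose proof (classic (A x)); pose proof (classic (B x)); tauto.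
  - apply borel_not, borel_or; apply borel_not; auto.
Qed.

Lemma borel_const (P : Prop) : borel d (fun _ => P).
Proof.
  destruct (classic P) as [H|H].
  - apply borel_ext with (fun _ => True); [tauto | apply borel_True].
  - apply borel_ext with (fun _ => False); [tauto | apply borel_False].
Qed.

End Borel.

Definition cont_map {T1 T2} (d1 : T1 -> T1 -> R) (d2 : T2 -> T2 -> R) (g : T1 -> T2) : Prop :=
  forall x e, 0 < e -> exists del, 0 < del /\ forall y, d1 x y < del -> d2 (g x) (g y) < e.

Section Preimage.
Context {T1 T2 : Type} (d1 : T1 -> T1 -> R) (d2 : T2 -> T2 -> R) (g : T1 -> T2)
  (Hg : cont_map d1 d2 g).

Lemma open_preimage U : open_set d2 U -> open_set d1 (fun x => U (g x)).
Proof.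
  intros HU x Hx. destruct (HU _ Hx) as [e [He HUe]].
  destruct (Hg x e He) as [del [Hdel Hball]]. exists del; split; auto.
Qed.

Lemma borel_preimage B : borel d2 B -> borel d1 (fun x => B (g x)).
Proof.
  intros HB S HS HO.
  apply (HB (fun C => S (fun x => C (g x)))).
  - destruct HS as [H0 [Hc Hu]]; split; [exact H0|split].
    + intros A HA; exact (Hc _ HA).
    + intros A HA; exact (Hu (fun n x => A n (g x)) HA).
  - intros U HU; apply HO, open_preimage, HU.
Qed.

End Preimage.

Lemma lip1_cont {T} (d : T -> T -> R) (h : T -> R) : lip1 d h -> cont_map d dR h.
Proof. intros Hh x e He; exists e; split; auto. intros y Hy; unfold dR; specialize (Hh x y); lra. Qed.

Lemma open_lt a : open_set dR (fun r => r < a).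
Proof. intros x Hx; exists (a - x); split; [lra|]. intros y Hy; apply Rabs_lt_bounds in Hy; lra. Qed.

Lemma open_gt a : open_set dR (fun r => a < r).
Proof. intros x Hx; exists (x - a); split; [lra|]. intros y Hy; apply Rabs_lt_bounds in Hy; lra. Qed.

Lemma open_Ioo a b : open_set dR (fun r => a < r < b).
Proof.
  intros x Hx. exists (Rmin (x - a) (b - x)). split.
  - apply Rmin_glb_lt; lra.
  - intros y Hy. pose proof (Rmin_l (x - a) (b - x)). pose proof (Rmin_r (x - a) (b - x)).
    apply Rabs_lt_bounds in Hy. lra.
Qed.

Lemma borel_le b : borel dR (fun r => r <= b).
Proof.
  apply borel_ext with (fun r => ~ (b < r)); [intro; split; intro; lra|].
  apply borel_not, borel_open, open_gt.
Qed.

Lemma borel_Icc a b : borel dR (fun r => a <= r <= b).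
Proof.
  apply borel_ext with (fun r => ~ (r < a \/ b < r)); [intro; split; intro; lra|].
  apply borel_not, borel_or; apply borel_open; [apply open_lt | apply open_gt].
Qed.

Section ProbabilityMeasure.
Context {T : Type} (d : T -> T -> R) (m : (T -> Prop) -> R) (Hm : borel_prob_measure d m).

Lemma measure_False : m (fun _ => False) = 0.
Proof. apply Hm. Qed.

Lemma measure_nonneg A : borel d A -> 0 <= m A.
Proof. apply Hm. Qed.

Lemma measure_True : m (fun _ => True) = 1.
Proof. apply Hm. Qed.

Lemma measure_or_disjoint A B : borel d A -> borel d B -> (forall x, A x -> B x -> False) ->
  m (fun x => A x \/ B x) = m A + m B.
Proof.
  intros HA HB HAB. destruct Hm as [H0 [_ [Hsum _]]].
  set (C := fun n : nat => match n with 0%nat => A | 1%nat => B | _ => fun _ => False end).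
  replace (m (fun x => A x \/ B x)) with (m (fun x => exists n, C n x)).
  2:{ apply measure_ext; intro x; split.
      - intros [[|[|n]] H]; simpl in H; tauto.
      - intros [H|H]; [exists 0%nat | exists 1%nat]; exact H. }
  apply (uniqueness_sum (fun n => m (C n))).
  - apply Hsum.
    + intros [|[|n]]; simpl; auto using borel_False.
    + intros [|[|i]] [|[|j]] x Hij; simpl; try tauto; eauto.
  - assert (Hpartial : forall n, sum_f_R0 (fun n => m (C n)) (S n) = m A + m B).
    { induction n; simpl in *; [ring | rewrite IHn, H0; ring]. }
    intros eps He; exists 1%nat; intros [|n] Hn; [lia|].
    rewrite Hpartial. unfold Rdist. replace (m A + m B - (m A + m B)) with 0 by ring.
    rewrite Rabs_R0; lra.
Qed.

Lemma measure_split A B : borel d A -> borel d B ->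
  m A = m (fun x => A x /\ B x) + m (fun x => A x /\ ~ B x).
Proof.
  intros HA HB. rewrite <- measure_or_disjoint.
  - apply measure_ext; intro x; pose proof (classic (B x)); tauto.
  - apply borel_and; auto.
  - apply borel_and; auto using borel_not.
  - intros x; tauto.
Qed.

Lemma measure_mono A B : borel d A -> borel d B -> (forall x, A x -> B x) -> m A <= m B.
Proof.
  intros HA HB HAB. rewrite (measure_split B A HB HA).
  replace (m (fun x => B x /\ A x)) with (m A) by (apply measure_ext; intro x; split; auto; tauto).
  assert (0 <= m (fun x => B x /\ ~ A x)); [|lra].
  apply measure_nonneg, borel_and; auto using borel_not.
Qed.

Lemma measure_le1 A : borel d A -> m A <= 1.
Proof. intros HA. rewrite <- measure_True. apply measure_mono; auto using borel_True. Qed.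

Lemma measure_not A : borel d A -> m (fun x => ~ A x) = 1 - m A.
Proof.
  intros HA. rewrite <- measure_True, (measure_split _ A (borel_True d) HA).
  rewrite (measure_ext m (fun x => True /\ A x) A), (measure_ext m (fun x => True /\ ~ A x) (fun x => ~ A x))
    by (intro; tauto).
  ring.
Qed.

Lemma measure_inhabited A : 0 < m A -> exists x, A x.
Proof.
  intros H. apply NNPP; intro Hn.
  rewrite (measure_ext m A (fun _ => False)), measure_False in H; [lra|].
  intro x; split; [intro; apply Hn; eauto | tauto].
Qed.

Lemma measure_increasing_union (A : nat -> T -> Prop) :
  (forall n, borel d (A n)) -> (forall n x, A n x -> A (S n) x) ->
  forall v, v < m (fun x => exists n, A n x) -> exists n, v < m (A n).
Proof.
  intros HA Hinc v Hv.
  assert (Hle : forall i j x, (i <= j)%nat -> A i x -> A j x).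
  { intros i j x Hij; induction Hij; auto. }
  set (D := fun n => match n with 0%nat => A 0%nat | S k => fun x => A (S k) x /\ ~ A k x end).
  assert (HD : forall n, borel d (D n)).
  { intros [|k]; simpl; auto. apply borel_and; auto using borel_not. }
  assert (HDA : forall n x, D n x -> A n x) by (intros [|k] x; simpl; tauto).
  assert (Hdisj : forall i j x, i <> j -> D i x -> D j x -> False).
  { assert (Hlt : forall i j x, (i < j)%nat -> D i x -> D j x -> False).
    { intros i [|k] x Hij Hi Hj; [lia|]. apply (proj2 Hj), (Hle i k); auto; lia. }
    intros i j x Hij Hi Hj. destruct (Nat.lt_ge_cases i j); [eapply Hlt; eauto|].
    apply (Hlt j i x); auto; lia. }
  assert (Hunion : m (fun x => exists n, D n x) = m (fun x => exists n, A n x)).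
  { apply measure_ext; intro x; split.
    - intros [n Hn]; exists n; auto.
    - intros [n Hn]. induction n; [exists 0%nat; exact Hn|].
      destruct (classic (A n x)); auto. exists (S n); simpl; auto. }
  assert (Hpartial : forall n, sum_f_R0 (fun k => m (D k)) n = m (A n)).
  { induction n; simpl; auto. rewrite IHn, (measure_split (A (S n)) (A n) (HA _) (HA _)).
    rewrite (measure_ext m (fun x => A (S n) x /\ A n x) (A n)) by (intro x; split; auto; tauto).
    reflexivity. }
  pose proof (proj1 (proj2 (proj2 Hm)) D HD Hdisj) as Hsum. rewrite Hunion in Hsum.
  destruct (Hsum (m (fun x => exists n, A n x) - v)) as [N HN]; [lra|].
  exists N. specialize (HN N (le_n _)). rewrite Hpartial in HN. unfold Rdist in HN.
  apply Rabs_lt_bounds in HN. lra.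
Qed.

End ProbabilityMeasure.

Lemma glb_exists (E : R -> Prop) : (exists r, E r) -> (exists w, forall r, E r -> w <= r) ->
  exists v, is_glb E v.
Proof.
  intros [r0 Hr0] [w Hw].
  destruct (completeness (fun r => E (- r))) as [l [Hl1 Hl2]].
  - exists (- w). intros r Hr. specialize (Hw _ Hr). lra.
  - exists (- r0). rewrite Ropp_involutive; auto.
  - exists (- l). split.
    + intros r Hr. assert (- r <= l) by (apply Hl1; rewrite Ropp_involutive; auto). lra.
    + intros w' Hw'. assert (l <= - w'); [|lra].
      apply Hl2. intros r Hr. specialize (Hw' _ Hr). lra.
Qed.

Lemma diam_Icc a b : a <= b -> diam_is (fun r => a <= r <= b) (b - a).
Proof.
  intros Hab; split.
  - intros t [x [y [Hx [Hy ->]]]]. unfold Rabs; destruct (Rcase_abs _); lra.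
  - intros w Hw. apply Hw. exists b, a. repeat split; try lra. rewrite Rabs_right; lra.
Qed.

Lemma diam_nonneg A r : diam_is A r -> 0 <= r.
Proof.
  intros [Hub Hlub]. destruct (classic (exists x, A x)) as [[x Hx]|Hn].
  - apply Hub. exists x, x. repeat split; auto. replace (x - x) with 0 by ring. rewrite Rabs_R0; auto.
  - assert (r <= r - 1); [|lra]. apply Hlub. intros t [x [y [Hx _]]]. exfalso; eauto.
Qed.

Lemma PD_approx mu alpha p : PD_is mu alpha p -> forall eps, 0 < eps ->
  exists A r, borel dR A /\ alpha <= mu A /\ diam_is A r /\ r < p + eps.
Proof.
  intros Hp eps Heps. apply NNPP; intro Hn.
  assert (p + eps <= p); [|lra].
  apply (proj2 Hp). intros r [A [HA [HmA Hr]]]. apply Rnot_lt_le; intro; apply Hn; eauto 7.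
Qed.

Section ObservableDiameter.
Context {T : Type} (d : T -> T -> R) (m : (T -> Prop) -> R)
  (Hd : is_metric d) (Hm : borel_prob_measure d m).

Lemma PD_push_exists h kappa : cont_map d dR h -> 0 < kappa ->
  exists p, PD_is (push h m) (1 - kappa) p /\ 0 <= p.
Proof.
  intros Hh Hk.
  set (B := fun (n : nat) x => - INR n <= h x <= INR n).
  assert (HB : forall n, borel d (B n)) by (intro n; apply (borel_preimage d dR h Hh _ (borel_Icc _ _))).
  destruct (measure_increasing_union d m Hm B HB) with (v := 1 - kappa) as [n Hn].
  { intros n x; unfold B; rewrite S_INR; lra. }
  { rewrite (measure_ext m _ (fun _ => True)), (measure_True d m Hm); [lra|].
    intro x; split; auto. intros _. destruct (INR_unbounded (Rabs (h x))) as [n Hn].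
    exists n. unfold B. pose proof (Rle_abs (h x)). pose proof (Rle_abs (- h x)).
    rewrite Rabs_Ropp in *. lra. }
  assert (Hlow : forall r, (exists A, borel dR A /\ 1 - kappa <= push h m A /\ diam_is A r) -> 0 <= r).
  { intros r [A [_ [_ HA]]]. eapply diam_nonneg; eauto. }
  destruct (glb_exists (fun r => exists A, borel dR A /\ 1 - kappa <= push h m A /\ diam_is A r))
    as [p Hp]; [|exists 0; exact Hlow|].
  - exists (INR n - - INR n), (fun r => - INR n <= r <= INR n).
    split; [apply borel_Icc | split; [unfold push; fold (B n); lra|]].
    apply diam_Icc. pose proof (pos_INR n); lra.
  - exists p; split; auto. apply (proj2 Hp), Hlow.
Qed.

Lemma OD_nonneg kappa a : 0 < kappa -> OD_is d m kappa a -> 0 <= a.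
Proof.
  intros Hk Ha.
  assert (Hl : lip1 d (fun _ => 0)).
  { intros x y. replace (0 - 0) with 0 by ring. rewrite Rabs_R0. apply metric_nonneg, Hd. }
  destruct (PD_push_exists _ kappa (lip1_cont d _ Hl) Hk) as [p [Hp Hp0]].
  assert (p <= a); [|lra]. apply (proj1 Ha). exists (fun _ => 0); split; auto.
Qed.

Lemma dist_to_set_exists (S : T -> Prop) : (exists s, S s) ->
  exists h : T -> R, lip1 d h /\ (forall x, 0 <= h x) /\ (forall s, S s -> h s = 0) /\
    (forall x r, h x < r -> nbhd d S r x).
Proof.
  intros [s0 Hs0].
  assert (Hglb : forall x, exists v, is_glb (fun r => exists s, S s /\ r = d x s) v).
  { intro x. apply glb_exists; [exists (d x s0); eauto|].
    exists 0. intros r [s [_ ->]]. apply metric_nonneg, Hd. }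
  destruct (choice _ Hglb) as [h Hh].
  assert (Hle : forall x s, S s -> h x <= d x s) by (intros x s Hs; apply (proj1 (Hh x)); eauto).
  assert (Hge : forall x w, (forall s, S s -> w <= d x s) -> w <= h x).
  { intros x w Hw. apply (proj2 (Hh x)). intros r [s [Hs ->]]; auto. }
  exists h. split; [|split; [|split]].
  - intros x y. apply Rabs_le; split.
    + assert (h y - d x y <= h x); [|lra]. apply Hge. intros s Hs.
      pose proof (Hle y s Hs). pose proof (metric_triangle d Hd y x s).
      rewrite (metric_sym d Hd y x) in *. lra.
    + assert (h x - d x y <= h y); [|lra]. apply Hge. intros s Hs.
      pose proof (Hle x s Hs). pose proof (metric_triangle d Hd x y s). lra.
  - intro x; apply Hge; intros; apply metric_nonneg, Hd.
  - intros s Hs. pose proof (Hle s s Hs). rewrite (metric_refl d Hd) in *.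
    assert (0 <= h s) by (apply Hge; intros; apply metric_nonneg, Hd). lra.
  - intros x r Hr. apply NNPP; intro Hn. assert (r <= h x); [|lra].
    apply Hge. intros s Hs. apply Rnot_lt_le. intro; apply Hn; exists s; auto.
Qed.

(** The distance function to [S] is 1-Lipschitz, so it is concentrated within
    [OD] on a set of measure [1 - kappa]; that set must meet [S] and hence lies
    in the neighbourhood. *)
Lemma OD_nbhd_measure kappa a : 0 < kappa -> OD_is d m kappa a ->
  forall S, borel d S -> kappa < m S -> forall eta, 0 < eta ->
  1 - kappa <= m (nbhd d S (a + eta)).
Proof.
  intros Hk Ha S HS HSk eta Heta.
  destruct (dist_to_set_exists S) as [h [Hlip [Hh0 [HhS Hhr]]]].
  { apply (measure_inhabited d m Hm). lra. }
  destruct (PD_push_exists h kappa (lip1_cont d h Hlip) Hk) as [ph [Hph _]].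
  assert (Hpa : ph <= a) by (apply (proj1 Ha); exists h; split; auto).
  destruct (PD_approx _ _ _ Hph eta Heta) as [A [r [HA [HmA [Hdiam Hr]]]]].
  unfold push in HmA.
  assert (HAh : borel d (fun x => A (h x))) by (apply (borel_preimage d dR h (lip1_cont d h Hlip)); auto).
  destruct (classic (exists x0, S x0 /\ A (h x0))) as [[x0 [Hx0S Hx0A]]|Hn].
  2:{ exfalso. pose proof (measure_le1 d m Hm (fun x => S x \/ A (h x)) (borel_or d _ _ HS HAh)) as Hle.
      rewrite (measure_or_disjoint d m Hm S _ HS HAh) in Hle; [lra|].
      intros x H1 H2; apply Hn; eauto. }
  eapply Rle_trans; [exact HmA|]. apply (measure_mono d m Hm); auto.
  - apply borel_open, open_nbhd, Hd.
  - intros x Hx. apply Hhr.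
    assert (Habs : Rabs (h x - h x0) <= r) by (apply (proj1 Hdiam); exists (h x), (h x0); auto).
    rewrite (HhS x0 Hx0S), Rminus_0_r, Rabs_right in Habs by apply Rle_ge, Hh0. lra.
Qed.

End ObservableDiameter.

Definition cdf {T : Type} (m : (T -> Prop) -> R) (g : T -> R) (t : R) : R :=
  m (fun x => g x <= t).

Definition is_quantile (L : R -> R) (k u : R) : Prop :=
  (forall t, u < t -> k < L t) /\ (forall t, t < u -> L t <= k).

Section Quantile.
Context {T : Type} (d : T -> T -> R) (m : (T -> Prop) -> R) (Hm : borel_prob_measure d m).

Lemma borel_sublevel g t : cont_map d dR g -> borel d (fun x => g x <= t).
Proof. intros Hg; apply (borel_preimage d dR g Hg _ (borel_le t)). Qed.

Lemma cdf_mono g t t' : cont_map d dR g -> t <= t' -> cdf m g t <= cdf m g t'.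
Proof. intros Hg Ht. apply (measure_mono d m Hm); auto using borel_sublevel. intros; lra. Qed.

Lemma quantile_exists g k : cont_map d dR g -> 0 < k < 1 -> exists u, is_quantile (cdf m g) k u.
Proof.
  intros Hg Hk.
  destruct (measure_increasing_union d m Hm (fun n x => g x <= INR n)
              (fun n => borel_sublevel g _ Hg)) with (v := k) as [n1 Hn1].
  { intros n x; rewrite S_INR; lra. }
  { rewrite (measure_ext m _ (fun _ => True)), (measure_True d m Hm); [lra|].
    intro x; split; auto. intros _. destruct (INR_unbounded (g x)) as [n Hn]. exists n; lra. }
  assert (Hsup : forall n, borel d (fun x => - INR n < g x)).
  { intro n. apply borel_ext with (fun x => ~ (g x <= - INR n)); [intro; split; intro; lra|].
    apply borel_not, borel_sublevel, Hg. }
  destruct (measure_increasing_union d m Hm (fun n x => - INR n < g x) Hsup) with (v := 1 - k)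
    as [n0 Hn0].
  { intros n x; rewrite S_INR; lra. }
  { rewrite (measure_ext m _ (fun _ => True)), (measure_True d m Hm); [lra|].
    intro x; split; auto. intros _. destruct (INR_unbounded (- g x)) as [n Hn]. exists n; lra. }
  assert (Hlow : cdf m g (- INR n0) < k).
  { unfold cdf. rewrite (measure_ext m _ (fun x => ~ (- INR n0 < g x))) by (intro; split; intro; lra).
    rewrite (measure_not d m Hm); auto. lra. }
  destruct (glb_exists (fun t => k < cdf m g t)) as [q [Hq1 Hq2]].
  - exists (INR n1); auto.
  - exists (- INR n0). intros t Ht. apply Rnot_lt_le; intro Hlt.
    pose proof (cdf_mono g t (- INR n0) Hg (Rlt_le _ _ Hlt)). lra.
  - exists q; split.
    + intros t Ht. apply NNPP; intro Hn. assert (t <= q); [|lra].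
      apply Hq2. intros r Hr. apply Rnot_lt_le; intro Hrt.
      pose proof (cdf_mono g r t Hg (Rlt_le _ _ Hrt)). lra.
    + intros t Ht. apply Rnot_lt_le. intro H. pose proof (Hq1 t H). lra.
Qed.

Lemma quantile_le_shift g1 g2 c k u1 u2 : cont_map d dR g1 -> cont_map d dR g2 ->
  (forall x, g1 x <= g2 x + c) ->
  is_quantile (cdf m g1) k u1 -> is_quantile (cdf m g2) k u2 -> u1 <= u2 + c.
Proof.
  intros H1 H2 Hg [_ Hq1] [Hq2 _]. apply Rnot_lt_le; intro Hlt.
  set (t := (u2 + (u1 - c)) / 2).
  assert (k < cdf m g2 t) by (apply Hq2; unfold t; lra).
  assert (cdf m g1 (t + c) <= k) by (apply Hq1; unfold t; lra).
  assert (cdf m g2 t <= cdf m g1 (t + c)); [|lra].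
  apply (measure_mono d m Hm); auto using borel_sublevel. intros x Hx; specialize (Hg x); lra.
Qed.

Lemma quantile_concentration (Hd : is_metric d) kappa a g w u del eta :
  0 < kappa -> OD_is d m kappa a -> cont_map d dR g ->
  (forall x y, Rabs (g x - g y) <= w (d x y)) -> (forall t r, 0 <= t <= 2 * r -> w t <= 2 * w r) ->
  is_quantile (cdf m g) kappa u -> 0 < del -> 0 < eta ->
  1 - 2 * kappa <= m (fun x => u - del < g x < u + del + 2 * w (a + eta)).
Proof.
  intros Hk Ha Hgc Hgw Hw2 [Hu1 Hu2] Hdel Heta.
  assert (Ha0 := OD_nonneg d m Hd Hm kappa a Hk Ha).
  set (S := fun x => g x <= u + del / 2).
  set (Low := fun x => g x <= u - del).
  set (N := nbhd d S (a + eta)).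
  assert (HS : borel d S) by (apply borel_sublevel; auto).
  assert (HLow : borel d Low) by (apply borel_sublevel; auto).
  assert (HN : borel d N) by (apply borel_open, open_nbhd, Hd).
  assert (HmN : 1 - kappa <= m N).
  { apply (OD_nbhd_measure d m Hd Hm kappa a Hk Ha S HS); auto. apply Hu1; lra. }
  assert (HmLow : m Low <= kappa) by (apply Hu2; lra).
  rewrite (measure_split d m Hm N Low HN HLow) in HmN.
  assert (m (fun x => N x /\ Low x) <= m Low).
  { apply (measure_mono d m Hm); auto. apply borel_and; auto. tauto. }
  assert (m (fun x => N x /\ ~ Low x) <= m (fun x => u - del < g x < u + del + 2 * w (a + eta))).
  { apply (measure_mono d m Hm).
    - apply borel_and; auto using borel_not.
    - apply (borel_preimage d dR g Hgc _ (borel_open dR _ (open_Ioo _ _))).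
    - intros x [[s [Hs Hxs]] Hl]. unfold Low, S in *.
      pose proof (Hgw x s) as Hxs'. apply Rabs_le_bounds in Hxs'.
      assert (w (d x s) <= 2 * w (a + eta)) by (apply Hw2; pose proof (metric_nonneg d Hd x s); lra).
      lra. }
  lra.
Qed.

End Quantile.

Inductive three := P0 | P1 | P2.

Definition three_dist (t r : R) (x y : three) : R :=
  match x, y with
  | P0, P0 | P1, P1 | P2, P2 => 0
  | P0, P1 | P1, P0 => t
  | _, _ => r
  end.

Lemma three_dist_metric t r : 0 < t -> t <= 2 * r -> is_metric (three_dist t r).
Proof.
  intros Ht Hr. split; [|split; [|split]].
  - intros [] []; simpl; lra.
  - intros [] []; simpl; split; intro H; try lra; try discriminate; auto.
  - intros [] []; simpl; auto.
  - intros [] [] []; simpl; lra.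
Qed.

Lemma dR_0 x : dR x x = 0.
Proof. apply (metric_refl dR dR_metric). Qed.

Lemma dR_0l x : 0 <= x -> dR 0 x = x.
Proof. intro Hx; unfold dR. rewrite Rabs_minus_sym, Rminus_0_r, Rabs_right; lra. Qed.

Lemma dR_0r x : 0 <= x -> dR x 0 = x.
Proof. intro Hx; unfold dR. rewrite Rminus_0_r, Rabs_right; lra. Qed.

Section ClassF2.
Context (F : R -> R -> R) (HF : in_F2 F).

Lemma F_metric {T1 T2 : Type} (d1 : T1 -> T1 -> R) (d2 : T2 -> T2 -> R) :
  is_metric d1 -> is_metric d2 ->
  is_metric (fun p q : T1 * T2 => F (d1 (fst p) (fst q)) (d2 (snd p) (snd q))).
Proof. apply HF. Qed.

Lemma F_nonneg s t : 0 <= s -> 0 <= t -> 0 <= F s t.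
Proof. apply HF. Qed.

Let F_plane := F_metric dR dR dR_metric dR_metric.

Lemma F_00 : F 0 0 = 0.
Proof. pose proof (metric_refl _ F_plane (0, 0)) as H; simpl in H. now rewrite dR_0 in H. Qed.

Lemma F_pos_l s : 0 < s -> 0 < F s 0.
Proof.
  intros Hs. destruct F_plane as [Hpos [Hsep _]].
  specialize (Hpos (s, 0) (0, 0)). specialize (Hsep (s, 0) (0, 0)). simpl in *.
  rewrite dR_0r, dR_0 in * by lra.
  destruct Hpos as [Hlt|Heq]; auto. symmetry in Heq. apply Hsep in Heq. injection Heq; lra.
Qed.

Lemma F_doubling_l t r : 0 <= t <= 2 * r -> F t 0 <= 2 * F r 0.
Proof.
  intros Ht. destruct (Req_dec t 0) as [->|Ht0].
  - rewrite F_00. pose proof (F_nonneg r 0 ltac:(lra) ltac:(lra)). lra.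
  - pose proof (F_metric (three_dist t r) dR (three_dist_metric t r ltac:(lra) ltac:(lra)) dR_metric)
      as Hm3.
    pose proof (metric_triangle _ Hm3 (P0, 0) (P2, 0) (P1, 0)) as H. simpl in H.
    rewrite dR_0 in H. lra.
Qed.

Lemma F_half_l s t : 0 <= s -> 0 <= t -> F (2 * s) 0 <= 2 * F s t.
Proof.
  intros Hs Ht. pose proof (metric_triangle _ F_plane (0, 0) (s, t) (2 * s, 0)) as H. simpl in H.
  rewrite dR_0, (dR_0l (2 * s)), (dR_0l s), (dR_0l t), (dR_0r t) in H by lra.
  replace (dR s (2 * s)) with s in H by (unfold dR; rewrite Rabs_minus_sym, Rabs_right; lra).
  lra.
Qed.

Lemma F_small_l e : 0 < e -> exists del, 0 < del /\
  forall s t, 0 <= s -> 0 <= t -> F s t < del -> s < e.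
Proof.
  intros He. exists (F e 0 / 4). split; [pose proof (F_pos_l e He); lra|].
  intros s t Hs Ht H. apply Rnot_le_lt; intro Hse.
  pose proof (F_doubling_l e (2 * s) ltac:(lra)). pose proof (F_half_l s t Hs Ht). lra.
Qed.

Lemma F_small_near0 e : 0 < e -> exists del, 0 < del /\
  forall s t, 0 <= s -> 0 <= t -> s < del -> t < del -> F s t < e.
Proof.
  intros He. destruct (proj1 HF 0 0 (Rle_refl _) (Rle_refl _) e He) as [del [Hdel H]].
  exists del; split; auto. intros s t Hs Ht Hsd Htd.
  specialize (H s t Hs Ht). rewrite F_00, !Rminus_0_r, !Rabs_right in H by lra.
  specialize (H Hsd Htd). rewrite Rabs_right in H; auto. apply Rle_ge, F_nonneg; auto.
Qed.

Lemma F_right_cont_l a b e : 0 <= a -> 0 <= b -> 0 < e ->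
  exists del, 0 < del /\ forall eta, 0 <= eta < del -> F (a + eta) b < F a b + e.
Proof.
  intros Ha Hb He. destruct (proj1 HF a b Ha Hb e He) as [del [Hdel H]].
  exists del; split; auto. intros eta Heta.
  assert (Rabs (F (a + eta) b - F a b) < e); [|apply Rabs_lt_bounds in H0; lra].
  apply H; try lra.
  - replace (a + eta - a) with eta by ring. rewrite Rabs_right; lra.
  - unfold Rminus; rewrite Rplus_opp_r, Rabs_R0; lra.
Qed.

End ClassF2.

Lemma in_F2_swap F : in_F2 F -> in_F2 (fun s t => F t s).
Proof.
  intros HF. split; [|split].
  - intros a b Ha Hb e He. destruct (proj1 HF b a Hb Ha e He) as [del [Hdel H]].
    exists del; split; auto.
  - intros; apply F_nonneg; auto.
  - intros T1 T2 d1 d2 Hd1 Hd2.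
    apply (is_metric_comap _ (F_metric F HF d2 d1 Hd2 Hd1) (fun p : T1 * T2 => (snd p, fst p))).
    intros [] [] H; injection H; intros; subst; reflexivity.
Qed.

Lemma F_doubling_r F t r : in_F2 F -> 0 <= t <= 2 * r -> F 0 t <= 2 * F 0 r.
Proof. intros HF; apply (F_doubling_l _ (in_F2_swap F HF)). Qed.

Lemma F_small_r F e : in_F2 F -> 0 < e -> exists del, 0 < del /\
  forall s t, 0 <= s -> 0 <= t -> F s t < del -> t < e.
Proof.
  intros HF He. destruct (F_small_l _ (in_F2_swap F HF) e He) as [del [Hdel H]].
  exists del; split; auto. intros s t Hs Ht Hst. apply (H t s); auto.
Qed.

Lemma F_right_cont_r F a b e : in_F2 F -> 0 <= a -> 0 <= b -> 0 < e ->
  exists del, 0 < del /\ forall eta, 0 <= eta < del -> F a (b + eta) < F a b + e.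
Proof. intros HF Ha Hb; apply (F_right_cont_l _ (in_F2_swap F HF) b a e Hb Ha). Qed.

Definition rect_union {TX TY : Type} (U : nat -> TX -> Prop) (V : nat -> TY -> Prop)
  (W : TY -> Prop) (N : nat) (x : TX) (y : TY) : Prop :=
  W y \/ exists n, (n < N)%nat /\ U n x /\ V n y.

Section RectUnion.
Context {TX TY : Type} (U : nat -> TX -> Prop) (V : nat -> TY -> Prop).

Lemma rect_union_0 W x y : rect_union U V W 0 x y <-> W y.
Proof. unfold rect_union; split; [intros [H|[n [Hn _]]]; auto; lia | auto]. Qed.

Lemma rect_union_S_in W N x y : U N x ->
  (rect_union U V W (S N) x y <-> rect_union U V (fun y => W y \/ V N y) N x y).
Proof.
  intros HU; unfold rect_union; split.
  - intros [H|[n [Hn [Hu Hv]]]]; auto.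
    destruct (Nat.eq_dec n N) as [->|Hne]; auto. right; exists n; repeat split; auto; lia.
  - intros [[H|H]|[n [Hn [Hu Hv]]]]; auto.
    + right; exists N; repeat split; auto.
    + right; exists n; repeat split; auto.
Qed.

Lemma rect_union_S_out W N x y : ~ U N x ->
  (rect_union U V W (S N) x y <-> rect_union U V W N x y).
Proof.
  intros HU; unfold rect_union; split.
  - intros [H|[n [Hn [Hu Hv]]]]; auto.
    destruct (Nat.eq_dec n N) as [->|Hne]; [tauto|]. right; exists n; repeat split; auto; lia.
  - intros [H|[n [Hn [Hu Hv]]]]; auto. right; exists n; repeat split; auto.
Qed.

Lemma rect_union_succ W N x y : rect_union U V W N x y -> rect_union U V W (S N) x y.
Proof. unfold rect_union; intros [H|[n [Hn H]]]; auto. right; exists n; split; auto. Qed.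

Lemma borel_rect_union_slice (dY : TY -> TY -> R) W N x :
  borel dY W -> (forall n, borel dY (V n)) -> borel dY (rect_union U V W N x).
Proof.
  intros HW HV. apply borel_or; auto.
  apply borel_ext with (fun y => exists n, ((n < N)%nat /\ U n x) /\ V n y).
  - intro y; split; intros [n Hn]; exists n; tauto.
  - apply borel_exists; intro n; apply borel_and; auto using borel_const.
Qed.

End RectUnion.

Section Product.
Context (F : R -> R -> R) (HF : in_F2 F) (X Y : mmSpace).

Lemma fst_cont : cont_map (dF F X Y) (mm_d X) fst.
Proof.
  intros p e He. destruct (F_small_l F HF e He) as [del [Hdel H]]. exists del; split; auto.
  intros q Hq. apply H in Hq; auto; apply metric_nonneg, mm_metric.
Qed.

Lemma snd_cont : cont_map (dF F X Y) (mm_d Y) snd.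
Proof.
  intros p e He. destruct (F_small_r F e HF He) as [del [Hdel H]]. exists del; split; auto.
  intros q Hq. apply H in Hq; auto; apply metric_nonneg, mm_metric.
Qed.

Lemma slice_cont x : cont_map (mm_d Y) (dF F X Y) (fun y => (x, y)).
Proof.
  intros y e He. destruct (F_small_near0 F HF e He) as [del [Hdel H]]. exists del; split; auto.
  intros y' Hy. unfold dF; simpl. rewrite (metric_refl _ (mm_metric X)).
  apply H; auto; try lra. apply metric_nonneg, mm_metric.
Qed.

Lemma borel_rect A B : borel (mm_d X) A -> borel (mm_d Y) B ->
  borel (dF F X Y) (fun p => A (fst p) /\ B (snd p)).
Proof.
  intros HA HB. apply borel_and.
  - apply (borel_preimage _ _ fst fst_cont A HA).
  - apply (borel_preimage _ _ snd snd_cont B HB).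
Qed.

(** Separability gives countably many balls; those rectangles of balls of radius
    [1/(k+1)] that lie inside [T] cover it. *)
Lemma open_rect_cover T : open_set (dF F X Y) T ->
  exists (U : nat -> mm_T X -> Prop) (V : nat -> mm_T Y -> Prop),
    (forall n, borel (mm_d X) (U n)) /\ (forall n, borel (mm_d Y) (V n)) /\
    (forall n x y, U n x -> V n y -> T (x, y)) /\
    (forall x y, T (x, y) -> exists n, U n x /\ V n y).
Proof.
  intros HT.
  destruct (mm_separable X) as [sX HsX]. destruct (mm_separable Y) as [sY HsY].
  set (ix := fun n => fst (Cantor.of_nat (fst (Cantor.of_nat n)))).
  set (jy := fun n => snd (Cantor.of_nat (fst (Cantor.of_nat n)))).
  set (rad := fun n => / (INR (snd (Cantor.of_nat n)) + 1)).
  set (Inside := fun n => forall x y, mm_d X (sX (ix n)) x < rad n ->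
                                      mm_d Y (sY (jy n)) y < rad n -> T (x, y)).
  exists (fun n x => Inside n /\ mm_d X (sX (ix n)) x < rad n), (fun n y => mm_d Y (sY (jy n)) y < rad n).
  split; [|split; [|split]].
  - intro n; apply borel_and; [apply borel_const | apply borel_open, open_ball, mm_metric].
  - intro n; apply borel_open, open_ball, mm_metric.
  - intros n x y [Hin Hx] Hy; auto.
  - intros x y Hxy. destruct (HT _ Hxy) as [e [He HTe]].
    destruct (F_small_near0 F HF e He) as [del [Hdel Hsmall]].
    destruct (INR_unbounded (2 / del)) as [k Hk].
    set (r := / (INR k + 1)).
    pose proof (pos_INR k) as Hk0.
    assert (Hr : 0 < r) by (unfold r; apply Rinv_0_lt_compat; lra).
    assert (Hr2 : 2 * r < del).
    { assert (Hrk : r * (INR k + 1) = 1) by (unfold r; field; lra).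
      assert (2 < del * INR k); [|nra].
      replace 2 with (2 / del * del) by (field; lra). rewrite (Rmult_comm del).
      apply Rmult_lt_compat_r; lra. }
    destruct (HsX x r Hr) as [i Hi]. destruct (HsY y r Hr) as [j Hj].
    exists (Cantor.to_nat (Cantor.to_nat (i, j), k)).
    unfold Inside, ix, jy, rad. rewrite cancel_of_to.
    change (fst (Cantor.to_nat (i, j), k)) with (Cantor.to_nat (i, j)).
    rewrite cancel_of_to. simpl. fold r.
    rewrite (metric_sym _ (mm_metric X) (sX i) x), (metric_sym _ (mm_metric Y) (sY j) y).
    split; [split|]; auto.
    intros x' y' Hx' Hy'. apply HTe. unfold dF; simpl.
    apply Hsmall; try apply metric_nonneg; try apply mm_metric.
    + pose proof (metric_triangle _ (mm_metric X) x (sX i) x'). lra.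
    + pose proof (metric_triangle _ (mm_metric Y) y (sY j) y'). lra.
Qed.

Section RectangleUnions.
Context (U : nat -> mm_T X -> Prop) (V : nat -> mm_T Y -> Prop)
  (HU : forall n, borel (mm_d X) (U n)) (HV : forall n, borel (mm_d Y) (V n)).

Lemma borel_rect_union_measure_gt N W theta : borel (mm_d Y) W ->
  borel (mm_d X) (fun x => theta < mm_m Y (rect_union U V W N x)).
Proof.
  revert W theta. induction N; intros W theta HW.
  - apply borel_ext with (fun _ => theta < mm_m Y W); [|apply borel_const].
    intro x. rewrite (measure_ext (mm_m Y) _ W (rect_union_0 U V W x)). tauto.
  - apply borel_ext with (fun x => (U N x /\ theta < mm_m Y (rect_union U V (fun y => W y \/ V N y) N x)) \/
                                   (~ U N x /\ theta < mm_m Y (rect_union U V W N x))).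
    + intro x. destruct (classic (U N x)) as [H|H].
      * rewrite (measure_ext (mm_m Y) _ _ (fun y => rect_union_S_in U V W N x y H)). tauto.
      * rewrite (measure_ext (mm_m Y) _ _ (fun y => rect_union_S_out U V W N x y H)). tauto.
    + apply borel_or; apply borel_and; auto using borel_not. apply IHN, borel_or; auto.
Qed.

Lemma borel_rect_union N A W : borel (mm_d X) A -> borel (mm_d Y) W ->
  borel (dF F X Y) (fun p => A (fst p) /\ rect_union U V W N (fst p) (snd p)).
Proof.
  intros HA HW.
  apply borel_ext with (fun p => (A (fst p) /\ W (snd p)) \/
     exists n, (A (fst p) /\ ((n < N)%nat /\ U n (fst p))) /\ V n (snd p)).
  - intro p; unfold rect_union; split.
    + intros [[Ha Hw]|[n [[Ha [Hn Hu]] Hv]]]; split; auto. right; exists n; auto.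
    + intros [Ha [Hw|[n [Hn [Hu Hv]]]]]; [left; auto | right; exists n; tauto].
  - apply borel_or; [apply borel_rect; auto|]. apply borel_exists; intro n.
    apply (borel_rect (fun x => A x /\ ((n < N)%nat /\ U n x)) (V n)); auto.
    apply borel_and; auto. apply borel_and; auto using borel_const.
Qed.

Context (m : (mm_T X * mm_T Y -> Prop) -> R) (Hm : is_product_measure F X Y m).

(** Splitting [A] along [U N] moves the [N]-th rectangle into [W],
    so the induction on [N] ends at a single product [A * W]. *)
Lemma rect_union_measure_lower N A W c : borel (mm_d X) A -> borel (mm_d Y) W ->
  (forall x, A x -> c <= mm_m Y (rect_union U V W N x)) ->
  c * mm_m X A <= m (fun p => A (fst p) /\ rect_union U V W N (fst p) (snd p)).
Proof.
  destruct Hm as [Hmp Hprod]. revert A W. induction N; intros A W HA HW Hc.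
  - rewrite (measure_ext m _ (fun p => A (fst p) /\ W (snd p)))
      by (intro p; rewrite rect_union_0; tauto).
    rewrite Hprod by auto.
    destruct (classic (exists x, A x)) as [[x Hx]|Hn].
    + specialize (Hc x Hx). rewrite (measure_ext (mm_m Y) _ W (rect_union_0 U V W x)) in Hc.
      pose proof (measure_nonneg _ _ (mm_prob X) A HA). nra.
    + rewrite (measure_ext (mm_m X) A (fun _ => False)) by (intro x; split; [intro; apply Hn; eauto | tauto]).
      rewrite (measure_False _ _ (mm_prob X)). pose proof (measure_nonneg _ _ (mm_prob Y) W HW). nra.
  - set (A1 := fun x => A x /\ U N x). set (A2 := fun x => A x /\ ~ U N x).
    assert (HA1 : borel (mm_d X) A1) by (apply borel_and; auto).
    assert (HA2 : borel (mm_d X) A2) by (apply borel_and; auto using borel_not).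
    assert (HW1 : borel (mm_d Y) (fun y => W y \/ V N y)) by (apply borel_or; auto).
    rewrite (measure_ext m _ (fun p =>
      (A1 (fst p) /\ rect_union U V (fun y => W y \/ V N y) N (fst p) (snd p)) \/
                                     (A2 (fst p) /\ rect_union U V W N (fst p) (snd p)))).
    2:{ intro p. unfold A1, A2. destruct (classic (U N (fst p))) as [H|H].
        - rewrite (rect_union_S_in U V W N (fst p) (snd p) H). tauto.
        - rewrite (rect_union_S_out U V W N (fst p) (snd p) H). tauto. }
    rewrite (measure_or_disjoint _ m Hmp); auto using borel_rect_union.
    2:{ intros p [[_ H1] _] [[_ H2] _]; auto. }
    rewrite (measure_split _ _ (mm_prob X) A (U N) HA (HU N)). fold A1 A2.
    assert (c * mm_m X A1 <=
            m (fun p => A1 (fst p) /\ rect_union U V (fun y => W y \/ V N y) N (fst p) (snd p))).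
    { apply IHN; auto. intros x [Hx Hu]. specialize (Hc x Hx).
      rewrite (measure_ext (mm_m Y) _ _ (fun y => rect_union_S_in U V W N x y Hu)) in Hc; auto. }
    assert (c * mm_m X A2 <= m (fun p => A2 (fst p) /\ rect_union U V W N (fst p) (snd p))).
    { apply IHN; auto. intros x [Hx Hu]. specialize (Hc x Hx).
      rewrite (measure_ext (mm_m Y) _ _ (fun y => rect_union_S_out U V W N x y Hu)) in Hc; auto. }
    lra.
Qed.

End RectangleUnions.

(** Only countable additivity on Borel sets is available, so [T] is exhausted by
    finite unions of rectangles, using continuity from below on both factors;
    [eps] is the price of stopping at a finite stage. *)
Lemma measure_open_lower_bound m : is_product_measure F X Y m ->
  forall T A c eps, open_set (dF F X Y) T -> borel (mm_d X) A ->
  (forall x, A x -> c <= mm_m Y (fun y => T (x, y))) -> 0 < eps -> 0 <= c - eps ->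
  (c - eps) * (mm_m X A - eps) <= m T.
Proof.
  intros Hm T A c eps HT HA Hc He Hce.
  destruct (open_rect_cover T HT) as [U [V [HU [HV [HUV Hcov]]]]].
  set (Cover := fun N x => rect_union U V (fun _ => False) N x).
  set (At := fun N x => A x /\ c - eps < mm_m Y (Cover N x)).
  assert (HR : forall N x, borel (mm_d Y) (Cover N x)).
  { intros; apply borel_rect_union_slice; auto using borel_False. }
  assert (HAt : forall N, borel (mm_d X) (At N)).
  { intro N; apply borel_and; [auto | apply borel_rect_union_measure_gt; auto using borel_False]. }
  assert (HAt_succ : forall N x, At N x -> At (S N) x).
  { intros N x [Hx HmR]. split; auto. eapply Rlt_le_trans; [exact HmR|].
    apply (measure_mono _ _ (mm_prob Y)); auto. intro y; apply rect_union_succ. }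
  assert (HAt_union : forall x, A x -> exists N, At N x).
  { intros x Hx.
    destruct (measure_increasing_union _ _ (mm_prob Y) (fun N => Cover N x) (fun N => HR N x)
                (fun N y => rect_union_succ U V _ N x y) (c - eps)) as [N HN].
    - apply Rlt_le_trans with c; [lra|]. apply Rle_trans with (mm_m Y (fun y => T (x, y))); [apply Hc; auto|].
      apply (measure_mono _ _ (mm_prob Y)).
      + apply (borel_preimage (mm_d Y) (dF F X Y) (fun y => (x, y)) (slice_cont x)).
        apply borel_open; auto.
      + apply borel_exists; auto.
      + intros y Hy. destruct (Hcov x y Hy) as [n [Hu Hv]].
        exists (S n). right. exists n; split; [lia | split; auto].
    - exists N; split; auto. }
  destruct (measure_increasing_union _ _ (mm_prob X) At HAt HAt_succ (mm_m X A - eps)) as [N HN].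
  { rewrite (measure_ext (mm_m X) (fun x => exists n, At n x) A); [lra|].
    intro x; split; [intros [N [Hx _]]; auto | intro Hx; apply HAt_union; auto]. }
  assert (H1 : (c - eps) * mm_m X (At N) <= m (fun p => At N (fst p) /\ Cover N (fst p) (snd p))).
  { apply (rect_union_measure_lower U V HU HV m Hm N (At N) (fun _ => False)); auto using borel_False.
    intros x [_ H]; apply Rlt_le, H. }
  assert (H2 : m (fun p => At N (fst p) /\ Cover N (fst p) (snd p)) <= m T).
  { apply (measure_mono _ _ (proj1 Hm)).
    - apply borel_rect_union; auto using borel_False.
    - apply borel_open; auto.
    - intros [x y] [_ [[]|[n [_ [Hu Hv]]]]]. apply HUV with n; auto. }
  assert ((c - eps) * (mm_m X A - eps) <= (c - eps) * mm_m X (At N)) by (apply Rmult_le_compat_l; lra).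
  lra.
Qed.

End Product.

Lemma cont_of_F_modulus F {T : Type} (d : T -> T -> R) (G : T -> R) : in_F2 F -> is_metric d ->
  (forall x x', Rabs (G x - G x') <= F (d x x') 0) -> cont_map d dR G.
Proof.
  intros HF Hd HG x e He. destruct (F_small_near0 F HF e He) as [del [Hdel H]].
  exists del; split; auto. intros x' Hx'. unfold dR. eapply Rle_lt_trans; [apply HG|].
  apply H; try lra; apply metric_nonneg, Hd.
Qed.

Section LipschitzOnProduct.
Context (F : R -> R -> R) (HF : in_F2 F) (X Y : mmSpace)
  (f : mm_T X * mm_T Y -> R) (Hf : lip1 (dF F X Y) f).

Lemma lip1_slice_modulus x y y' : Rabs (f (x, y) - f (x, y')) <= F 0 (mm_d Y y y').
Proof.
  pose proof (Hf (x, y) (x, y')) as H. unfold dF in H; simpl in H.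
  now rewrite (metric_refl _ (mm_metric X)) in H.
Qed.

Lemma lip1_slice_cont x : cont_map (mm_d Y) dR (fun y => f (x, y)).
Proof.
  intros y e He. destruct (slice_cont F HF X Y x y e He) as [del [Hdel H]].
  exists del; split; auto. intros y' Hy'. specialize (H y' Hy'). unfold dR.
  pose proof (Hf (x, y) (x, y')). lra.
Qed.

Lemma lip1_shift_fst x x' y : f (x, y) <= f (x', y) + F (mm_d X x x') 0.
Proof.
  pose proof (Hf (x, y) (x', y)) as H. unfold dF in H; simpl in H.
  rewrite (metric_refl _ (mm_metric Y)) in H. apply Rabs_le_bounds in H. lra.
Qed.

Lemma fiber_quantile_exists k : 0 < k < 1 ->
  exists G : mm_T X -> R,
    (forall x, is_quantile (cdf (mm_m Y) (fun y => f (x, y))) k (G x)) /\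
    (forall x x', Rabs (G x - G x') <= F (mm_d X x x') 0).
Proof.
  intros Hk.
  destruct (choice (fun x u => is_quantile (cdf (mm_m Y) (fun y => f (x, y))) k u)) as [G HG].
  { intro x. apply (quantile_exists _ _ (mm_prob Y)); auto using lip1_slice_cont. }
  exists G; split; auto. intros x x'.
  assert (Hshift : forall x x', G x <= G x' + F (mm_d X x x') 0).
  { intros x1 x2. apply (quantile_le_shift _ _ (mm_prob Y) (fun y => f (x1, y)) (fun y => f (x2, y))
                           _ k); auto using lip1_slice_cont, lip1_shift_fst. }
  pose proof (Hshift x x'). pose proof (Hshift x' x).
  rewrite (metric_sym _ (mm_metric X) x' x) in *. apply Rabs_le; lra.
Qed.

Context (m : (mm_T X * mm_T Y -> Prop) -> R) (Hm : is_product_measure F X Y m)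
  (kappa kappa' a b : R) (Hk : 0 < kappa < 1) (Hk' : 0 < kappa' < 1/4)
  (Ha : OD_is (mm_d X) (mm_m X) kappa a) (Hb : OD_is (mm_d Y) (mm_m Y) kappa' b).

(** Since [(1 - 2 kappa)(1 - 2 kappa') >= 1 - 2 (kappa + kappa')], the surplus
    [2 kappa kappa'] can be spent as the [eps] of [measure_open_lower_bound]. *)
Lemma product_concentration G u del eta :
  (forall x, is_quantile (cdf (mm_m Y) (fun y => f (x, y))) kappa' (G x)) ->
  (forall x x', Rabs (G x - G x') <= F (mm_d X x x') 0) ->
  is_quantile (cdf (mm_m X) G) kappa u -> 0 < del -> 0 < eta ->
  1 - 2 * (kappa + kappa') <=
    m (fun q => u - 2 * del < f q < u + 2 * del + 2 * F (a + eta) 0 + 2 * F 0 (b + eta)).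
Proof.
  intros HGq HGmod Hu Hdel Heta.
  assert (HGc := cont_of_F_modulus F (mm_d X) G HF (mm_metric X) HGmod).
  set (A := fun x => u - del < G x < u + del + 2 * F (a + eta) 0).
  set (T := fun q => u - 2 * del < f q < u + 2 * del + 2 * F (a + eta) 0 + 2 * F 0 (b + eta)).
  assert (HA : borel (mm_d X) A) by apply (borel_preimage _ dR G HGc _ (borel_open _ _ (open_Ioo _ _))).
  assert (HT : open_set (dF F X Y) T) by apply (open_preimage _ dR f (lip1_cont _ f Hf) _ (open_Ioo _ _)).
  assert (HmA : 1 - 2 * kappa <= mm_m X A).
  { apply (quantile_concentration _ _ (mm_prob X) (mm_metric X) kappa a G (fun t => F t 0)); try lra; auto.
    intros t r Ht; apply F_doubling_l; auto. }
  assert (Hfibre : forall x, A x -> 1 - 2 * kappa' <= mm_m Y (fun y => T (x, y))).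
  { intros x Hx. eapply Rle_trans.
    - apply (quantile_concentration _ _ (mm_prob Y) (mm_metric Y) kappa' b (fun y => f (x, y))
               (fun t => F 0 t) (G x) del eta); try lra; auto using lip1_slice_cont, lip1_slice_modulus.
      intros t r Ht; apply F_doubling_r; auto.
    - apply (measure_mono _ _ (mm_prob Y)).
      + apply (borel_preimage _ dR _ (lip1_slice_cont x) _ (borel_open _ _ (open_Ioo _ _))).
      + apply (borel_preimage _ _ (fun y => (x, y)) (slice_cont F HF X Y x)), borel_open, HT.
      + intros y Hy. unfold T. unfold A in Hx. lra. }
  destruct (Rle_dec (1 - 2 * (kappa + kappa')) 0) as [Hle|Hgt].
  { pose proof (measure_nonneg _ _ (proj1 Hm) T (borel_open _ _ HT)). lra. }
  assert (Hfub := measure_open_lower_bound F HF X Y m Hm T A (1 - 2 * kappa') (2 * kappa * kappa')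
                    HT HA Hfibre ltac:(nra) ltac:(nra)).
  assert ((1 - 2 * kappa' - 2 * kappa * kappa') * (1 - 2 * kappa - 2 * kappa * kappa') <=
          (1 - 2 * kappa' - 2 * kappa * kappa') * (mm_m X A - 2 * kappa * kappa'))
    by (apply Rmult_le_compat_l; nra).
  assert (0 < kappa * kappa') by nra.
  nra.
Qed.

End LipschitzOnProduct.

Lemma PD_le_Icc mu alpha p l r : PD_is mu alpha p -> l <= r ->
  alpha <= mu (fun t => l <= t <= r) -> p <= r - l.
Proof.
  intros Hp Hlr Hmu. apply (proj1 Hp). exists (fun t => l <= t <= r).
  split; [apply borel_Icc | split; auto using diam_Icc].
Qed.

Lemma le_of_F_slack F a b p : in_F2 F -> 0 <= a -> 0 <= b ->
  (forall del eta, 0 < del -> 0 < eta -> p <= 4 * del + 2 * F (a + eta) 0 + 2 * F 0 (b + eta)) ->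
  p <= 2 * F a 0 + 2 * F 0 b.
Proof.
  intros HF Ha Hb Hslack. apply Rnot_lt_le; intro Hlt.
  set (gap := p - (2 * F a 0 + 2 * F 0 b)).
  assert (Hgap : 0 < gap / 8) by (unfold gap; lra).
  destruct (F_right_cont_l F HF a 0 (gap / 8) Ha (Rle_refl 0) Hgap) as [d1 [Hd1 H1]].
  destruct (F_right_cont_r F 0 b (gap / 8) HF (Rle_refl 0) Hb Hgap) as [d2 [Hd2 H2]].
  set (eta := Rmin d1 d2 / 2).
  assert (0 < Rmin d1 d2) by (apply Rmin_glb_lt; lra).
  pose proof (Rmin_l d1 d2). pose proof (Rmin_r d1 d2).
  specialize (H1 eta ltac:(unfold eta; lra)). specialize (H2 eta ltac:(unfold eta; lra)).
  pose proof (Hslack (gap / 16) eta ltac:(unfold gap; lra) ltac:(unfold eta; lra)).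
  unfold gap in *. lra.
Qed.

Theorem mainTheorem9 (X Y : mmSpace) (F : R -> R -> R) (HF : in_F2 F)
  (m : (mm_T X * mm_T Y -> Prop) -> R) (Hm : is_product_measure F X Y m)
  (kappa kappa' : R) (Hk : 0 < kappa < 1) (Hk' : 0 < kappa' < 1/4)
  (a b : R) (Ha : OD_is (mm_d X) (mm_m X) kappa a) (Hb : OD_is (mm_d Y) (mm_m Y) kappa' b) :
  forall p, OD_set (dF F X Y) m (2 * (kappa + kappa')) p ->
    p <= 4 * F a 0 + 8 * F 0 b.
Proof.
  intros p [f [Hf Hp]].
  assert (Ha0 := OD_nonneg _ _ (mm_metric X) (mm_prob X) kappa a (proj1 Hk) Ha).
  assert (Hb0 := OD_nonneg _ _ (mm_metric Y) (mm_prob Y) kappa' b (proj1 Hk') Hb).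
  destruct (fiber_quantile_exists F HF X Y f Hf kappa') as [G [HGq HGmod]]; [lra|].
  destruct (quantile_exists _ _ (mm_prob X) G kappa) as [u Hu]; auto.
  { apply (cont_of_F_modulus F); auto using mm_metric. }
  assert (p <= 2 * F a 0 + 2 * F 0 b).
  { apply (le_of_F_slack F a b p HF Ha0 Hb0). intros del eta Hdel Heta.
    assert (0 <= F (a + eta) 0 /\ 0 <= F 0 (b + eta)) as [Hpa Hpb] by (split; apply F_nonneg; auto; lra).
    replace (4 * del + 2 * F (a + eta) 0 + 2 * F 0 (b + eta))
      with (u + 2 * del + 2 * F (a + eta) 0 + 2 * F 0 (b + eta) - (u - 2 * del)) by ring.
    apply (PD_le_Icc _ _ _ _ _ Hp); [lra|].
    eapply Rle_trans.
    - apply (product_concentration F HF X Y f Hf m Hm kappa kappa' a b Hk Hk' Ha Hb G u del eta); auto.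
    - apply (measure_mono _ _ (proj1 Hm)).
      + apply (borel_preimage _ dR f (lip1_cont _ f Hf) _ (borel_open _ _ (open_Ioo _ _))).
      + apply (borel_preimage _ dR f (lip1_cont _ f Hf) _ (borel_Icc _ _)).
      + intros q Hq; lra. }
  assert (0 <= F a 0 /\ 0 <= F 0 b) by (split; apply F_nonneg; auto; lra).
  lra.
Qed.
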